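(* Let $\mathcal H$ be a graded connected Hopf algebra over a field $\Bbbk$ of characteristic different from $2$. Let $\varphi,\psi\colon\mathcal H\to\Bbbk$ be linear functionals with $\varphi_0=\psi_0=\epsilon$. Then: (a) There is a unique linear functional $\rho\colon\mathcal H\to\Bbbk$ such that $\varphi=\rho\psi\rho$ and $\rho_0=\epsilon$. (b) If $\varphi$ and $\psi$ are characters, then so is $\rho$. (c) If $\bar\varphi=\psi^{-1}$ then $\rho$ is even, and if $\bar\varphi=\psi$ then $\rho$ is odd.
   Context: $\mathcal H=\bigoplus_{n\ge0}\mathcal H_n$ is graded connected ($\mathcal H_0=\Bbbk\cdot1$, structure maps graded) with each $\mathcal H_n$ finite-dimensional. For a linear functional $\varphi$, $\varphi_n$ denotes its restriction to $\mathcal H_n$, and $\epsilon$ (the counit) is viewed as $\epsilon_0$. Products of linear functionals are convolution products $\varphi\psi=m_\Bbbk\circ(\varphi\otimes\psi)\circ\Delta$. A character is an algebra morphism $\mathcal H\to\Bbbk$; characters form a group under convolution with inverse $\varphi^{-1}=\varphi\circ S$. For a linear functional $\varphi$, $\bar\varphi(h)=(-1)^n\varphi(h)$ for $h\in\mathcal H_n$. A character $\rho$ is even if $\bar\rho=\rho$ and odd if $\bar\rho=\rho^{-1}$. *)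

From HB Require Import structures.
From mathcomp Require Import all_boot all_order all_algebra.
Set Implicit Arguments. Unset Strict Implicit. Unset Printing Implicit Defensive.
Import Order.TTheory GRing.Theory Num.Theory.
Local Open Scope ring_scope.

(* Tensors in H (x) H are represented by finite formal sums (seq of pairs).
   They are only ever evaluated against pairs of linear functionals,
   f (x) g : a (x) b |-> f a * g b, which separate points of H (x) H over a
   field; all coalgebra axioms are stated through such evaluations. *)

Section GCHopf.
Variables (k : fieldType) (H : algType k).

Definition lin_fun (f : H -> k) : Prop :=
  forall (a : k) (x y : H), f (a *: x + y) = a * f x + f y.

Definition lin_map (f : H -> H) : Prop :=
  forall (a : k) (x y : H), f (a *: x + y) = a *: f x + f y.

Definition tens (f g : H -> k) (t : seq (H * H)) : k :=
  \sum_(p <- t) f p.1 * g p.2.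

(* A graded connected Hopf algebra structure on the k-algebra H, with
   H_n = image of proj n, each H_n finite-dimensional, H = (+)_n H_n. *)
Record gc_hopf := GCHopf {
  cop : H -> seq (H * H);
  cou : H -> k;
  ant : H -> H;
  proj : nat -> H -> H;
  gbnd : H -> nat;                 (* x lies in (+)_(n < gbnd x) H_n *)
  cop_lin : forall f g, lin_fun f -> lin_fun g -> lin_fun (fun x => tens f g (cop x));
  coassoc : forall f g h x, lin_fun f -> lin_fun g -> lin_fun h ->
    \sum_(p <- cop x) tens f g (cop p.1) * h p.2 =
    \sum_(p <- cop x) f p.1 * tens g h (cop p.2);
  cou_lin : lin_fun cou;
  cou_l : forall x, \sum_(p <- cop x) cou p.1 *: p.2 = x;
  cou_r : forall x, \sum_(p <- cop x) cou p.2 *: p.1 = x;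
  cou_mul : forall x y, cou (x * y) = cou x * cou y;
  cou_one : cou 1 = 1;
  cop_mul : forall f g x y, lin_fun f -> lin_fun g ->
    tens f g (cop (x * y)) =
    \sum_(p <- cop x) \sum_(q <- cop y) f (p.1 * q.1) * g (p.2 * q.2);
  cop_one : forall f g, lin_fun f -> lin_fun g -> tens f g (cop 1) = f 1 * g 1;
  ant_lin : lin_map ant;
  ant_l : forall x, \sum_(p <- cop x) ant p.1 * p.2 = cou x *: 1;
  ant_r : forall x, \sum_(p <- cop x) p.1 * ant p.2 = cou x *: 1;
  proj_lin : forall n, lin_map (proj n);
  proj_proj : forall n m x, proj n (proj m x) = if n == m then proj n x else 0;
  gbnd_zero : forall n x, (gbnd x <= n)%N -> proj n x = 0;
  gbnd_sum : forall x, x = \sum_(n < gbnd x) proj n x;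
  proj_fin : forall n, exists s : seq H, forall x,
      exists c : nat -> k, proj n x = \sum_(i < size s) c i *: s`_i;
  proj0_one : proj 0 1 = 1;
  proj0_scal : forall x, exists c : k, proj 0 x = c *: 1;
  mul_graded : forall p q x y,
    proj (p + q) (proj p x * proj q y) = proj p x * proj q y;
  cop_graded : forall f g n x, lin_fun f -> lin_fun g ->
    tens f g (cop (proj n x)) =
    \sum_(i < n.+1) tens (f \o proj i) (g \o proj (n - i)) (cop (proj n x));
  cou_graded : forall n x, (0 < n)%N -> cou (proj n x) = 0;
  ant_graded : forall n x, ant (proj n x) = proj n (ant x)
}.

Variable S : gc_hopf.

Definition conv (f g : H -> k) : H -> k := fun x => tens f g (cop S x).

Definition restr0_is_cou (f : H -> k) : Prop :=
  forall x, f (proj S 0 x) = cou S (proj S 0 x).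

Definition character (f : H -> k) : Prop :=
  [/\ lin_fun f, f 1 = 1 & forall x y, f (x * y) = f x * f y].

Definition bar (f : H -> k) : H -> k :=
  fun x => \sum_(n < gbnd S x) (-1) ^+ n * f (proj S n x).

Definition conv_inv (f g : H -> k) : Prop :=
  forall x, conv f g x = cou S x /\ conv g f x = cou S x.

Definition even_fun (f : H -> k) : Prop := forall x, bar f x = f x.
Definition odd_fun (f : H -> k) : Prop := conv_inv f (bar f).

End GCHopf.

(* Linear functionals on H, filtered by the degree below which they vanish, form a
   complete and separated filtered algebra under convolution; those with rho_0 = epsilon
   are its unipotent elements.
   For a perturbation E vanishing below degree n > 0,
   (rho + E) psi (rho + E) = rho psi rho + 2 E  up to terms vanishing below degree n + 1.
   As 2 is invertible, phi = rho psi rho can be solved one degree at a time, and two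
   solutions cannot differ in a lowest degree.  Bilinear forms on H x H (the dual of
   H (x) H) form an algebra of the same kind, in which rho o m and rho (x) rho both solve
   the equation for phi o m = phi (x) phi when phi and psi are characters; hence they
   agree.  Finally bar is a convolution automorphism, so bar rho solves the equation for
   bar phi and bar psi; when bar phi = psi^-1 so does rho, and when bar phi = psi so
   does rho^-1. *)

From HB Require Import structures.
From mathcomp Require Import all_boot all_order all_algebra.
From Stdlib Require Import FunctionalExtensionality.
From mathcomp Require Import ring zify.
Set Implicit Arguments. Unset Strict Implicit. Unset Printing Implicit Defensive.
Import Order.TTheory GRing.Theory Num.Theory.
Local Open Scope ring_scope.

Section LinearFunctionals.
Variables (k : fieldType) (H : algType k).
Implicit Types (f g : H -> k).

Lemma lin0 f : lin_fun f -> f 0 = 0.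
Proof.
move=> lf; have h := lf 1 0 0; rewrite scale1r addr0 mul1r in h.
by apply: (addIr (f 0)); rewrite add0r -h.
Qed.

Lemma linD f : lin_fun f -> forall x y, f (x + y) = f x + f y.
Proof. by move=> lf x y; rewrite -(scale1r x) lf mul1r scale1r. Qed.

Lemma linZ f : lin_fun f -> forall a x, f (a *: x) = a * f x.
Proof. by move=> lf a x; rewrite -(addr0 (a *: x)) lf lin0 // addr0. Qed.

Lemma lin_sum f I (r : seq I) (F : I -> H) : lin_fun f ->
  f (\sum_(i <- r) F i) = \sum_(i <- r) f (F i).
Proof. by move=> lf; apply: (big_morph f (linD lf) (lin0 lf)). Qed.

Lemma lin_add f g : lin_fun f -> lin_fun g -> lin_fun (fun x => f x + g x).
Proof. by move=> lf lg a x y; rewrite lf lg; ring. Qed.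

Lemma lin_sub f g : lin_fun f -> lin_fun g -> lin_fun (fun x => f x - g x).
Proof. by move=> lf lg a x y; rewrite lf lg; ring. Qed.

Lemma lin_mull f c : lin_fun f -> lin_fun (fun x => c * f x).
Proof. by move=> lf a x y; rewrite lf; ring. Qed.

Lemma lin_mulr f c : lin_fun f -> lin_fun (fun x => f x * c).
Proof. by move=> lf a x y; rewrite lf; ring. Qed.

Lemma lin_comp f (m : H -> H) : lin_fun f -> lin_map m -> lin_fun (f \o m).
Proof. by move=> lf lm a x y /=; rewrite lm lf. Qed.

Lemma lin_sum_fun I (r : seq I) (F : I -> H -> k) :
  (forall i, lin_fun (F i)) -> lin_fun (fun x => \sum_(i <- r) F i x).
Proof.
move=> lF a x y; rewrite mulr_sumr -big_split /=.
by apply: eq_bigr => i _; rewrite lF.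
Qed.

End LinearFunctionals.

Definition vanish (T : Type) (k : fieldType) (low : nat -> T -> Prop) n (f : T -> k) :=
  forall t, low n t -> f t = 0.

(* Functions T -> k under a convolution [cmul], well behaved on the [admissible] ones
   (linear, resp. bilinear, forms); [low n t] says that the point t has degree < n, and
   [vanish low n] is the n-th ideal of a multiplicative, separated filtration. *)
Record convAlg (k : fieldType) (T : Type) := ConvAlg {
  cmul : (T -> k) -> (T -> k) -> T -> k;
  cunit : T -> k;
  admissible : (T -> k) -> Prop;
  low : nat -> T -> Prop;
  cmulDl : forall f g h,
    cmul (fun t => f t + g t) h = (fun t => cmul f h t + cmul g h t);
  cmulDr : forall f g h,
    cmul h (fun t => f t + g t) = (fun t => cmul h f t + cmul h g t);
  cmul1l : forall f, admissible f -> cmul cunit f = f;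
  cmul1r : forall f, admissible f -> cmul f cunit = f;
  admissible_cmul : forall f g, admissible f -> admissible g -> admissible (cmul f g);
  admissible_add : forall f g, admissible f -> admissible g ->
    admissible (fun t => f t + g t);
  admissible_sub : forall f g, admissible f -> admissible g ->
    admissible (fun t => f t - g t);
  admissible_unit : admissible cunit;
  low0 : forall t, ~ low 0 t;
  low_le : forall n m t, (n <= m)%N -> low n t -> low m t;
  vanish_cmul : forall n m f g, admissible f -> admissible g ->
    vanish low n f -> vanish low m g -> vanish low (n + m) (cmul f g);
  vanish_separated : forall f, admissible f -> (forall n, vanish low n f) ->
    forall t, f t = 0
}.

Section ConvAlgTheory.
Variables (k : fieldType) (T : Type) (A : convAlg k T).
Implicit Types (f g h R E psi : T -> k).
Local Notation mul := (cmul A).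
Local Notation e := (cunit A).
Local Notation adm := (admissible A).
Local Notation vanish := (vanish (low A)).

Lemma vanish0 f : vanish 0 f.
Proof. by move=> t lt; case: (low0 lt). Qed.

Lemma vanish_le n m f : (m <= n)%N -> vanish n f -> vanish m f.
Proof. by move=> le vf t /(low_le le); apply: vf. Qed.

Lemma vanish_add n f g : vanish n f -> vanish n g -> vanish n (fun t => f t + g t).
Proof. by move=> vf vg t lt; rewrite vf // vg // addr0. Qed.

Lemma vanish_sub n f g : vanish n f -> vanish n g -> vanish n (fun t => f t - g t).
Proof. by move=> vf vg t lt; rewrite vf // vg // subrr. Qed.

Lemma vanish_eq n f g : f = g -> vanish n f -> vanish n g.
Proof. by move->. Qed.

Lemma cmulBl f g h : mul (fun t => f t - g t) h = (fun t => mul f h t - mul g h t).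
Proof.
have fE : (fun t => f t - g t + g t) = f.
  by apply: functional_extensionality => t; rewrite subrK.
apply: functional_extensionality => t; apply: (addIr (mul g h t)).
by rewrite subrK -[in RHS]fE [in RHS]cmulDl.
Qed.

Lemma cmulBr f g h : mul h (fun t => f t - g t) = (fun t => mul h f t - mul h g t).
Proof.
have fE : (fun t => f t - g t + g t) = f.
  by apply: functional_extensionality => t; rewrite subrK.
apply: functional_extensionality => t; apply: (addIr (mul h g t)).
by rewrite subrK -[in RHS]fE [in RHS]cmulDr.
Qed.

Definition unipotent f := vanish 1 (fun t => f t - e t).

Lemma unipotent_unit : unipotent e.
Proof. by move=> t _; rewrite subrr. Qed.

Lemma vanish_cmul_unipotentl n f D : adm f -> unipotent f -> adm D -> vanish n D ->
  vanish n.+1 (fun t => mul f D t - D t).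
Proof.
move=> af uf aD vD; apply: (vanish_eq (f := mul (fun t => f t - e t) D)).
  by rewrite cmulBl cmul1l.
rewrite -add1n; apply: vanish_cmul => //.
exact: admissible_sub af (admissible_unit A).
Qed.

Lemma vanish_cmul_unipotentr n f D : adm f -> unipotent f -> adm D -> vanish n D ->
  vanish n.+1 (fun t => mul D f t - D t).
Proof.
move=> af uf aD vD; apply: (vanish_eq (f := mul D (fun t => f t - e t))).
  by rewrite cmulBr cmul1r.
rewrite -addn1; apply: vanish_cmul => //.
exact: admissible_sub af (admissible_unit A).
Qed.

Lemma unipotent_cmul f g : adm f -> unipotent f -> adm g -> unipotent g ->
  unipotent (mul f g).
Proof.
move=> af uf ag ug; apply: (vanish_eq (f := fun t => (mul f g t - g t) + (g t - e t))).
  by apply: functional_extensionality => t; rewrite addrA subrK.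
by apply: vanish_add => //; apply: vanish_cmul_unipotentl => //; exact: vanish0.
Qed.

Definition first_order (F : (T -> k) -> T -> k) (lam : k) :=
  forall n R E, adm R -> unipotent R -> adm E -> vanish n E -> (0 < n)%N ->
  vanish n.+1 (fun t => F (fun u => R u + E u) t - F R t - lam * E t).

Section FirstOrder.
Variables (F : (T -> k) -> T -> k) (lam : k).
Hypothesis F_first_order : first_order F lam.

Lemma first_order_congr n R R' : adm R -> unipotent R -> adm R' ->
  vanish n (fun t => R' t - R t) -> vanish n (fun t => F R' t - F R t).
Proof.
move=> aR uR aR'; case: n => [|n] vE; first exact: vanish0.
have RE : (fun t => R t + (R' t - R t)) = R'.
  by apply: functional_extensionality => t; rewrite addrC subrK.
have := F_first_order aR uR (admissible_sub aR' aR) vE isT.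
move=> /(vanish_le (leqnSn _)) vF t lt; have := vF t lt.
by rewrite RE (vE t lt) mulr0 subr0.
Qed.

Lemma first_order_inj R R' : lam != 0 ->
  adm R -> unipotent R -> adm R' -> unipotent R' ->
  (forall t, F R t = F R' t) -> forall t, R t = R' t.
Proof.
move=> lam0 aR uR aR' uR' eF.
set E := fun t => R' t - R t.
have aE : adm E by apply: admissible_sub.
have RE : (fun t => R t + E t) = R'.
  by apply: functional_extensionality => t; rewrite /E addrC subrK.
have vE n : vanish n.+1 E.
  elim: n => [|n IH] t lt.
    have -> : E t = (R' t - e t) - (R t - e t) by rewrite /E; ring.
    by rewrite uR' // uR // subrr.
  have := F_first_order aR uR aE IH isT lt; rewrite RE eF subrr sub0r => /eqP.
  by rewrite oppr_eq0 mulf_eq0 (negbTE lam0) => /eqP.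
move=> t; apply/eqP; rewrite eq_sym -subr_eq0; apply/eqP.
by apply: (vanish_separated aE) => n; apply: vanish_le (vE n).
Qed.

End FirstOrder.

Definition sandwich psi R := mul (mul R psi) R.

Lemma sandwich_first_order psi : adm psi -> unipotent psi ->
  first_order (sandwich psi) 2%:R.
Proof.
move=> apsi upsi n R E aR uR aE vE n0.
have aRpsi := admissible_cmul aR apsi; have aEpsi := admissible_cmul aE apsi.
apply: (vanish_eq (f := fun t => (mul (mul R psi) E t - E t)
    + (mul (mul E psi) R t - mul E psi t) + (mul E psi t - E t)
    + mul (mul E psi) E t)).
  apply: functional_extensionality => t.
  by rewrite /sandwich !cmulDl !cmulDr /=; ring.
have vEpsi : vanish n (mul E psi).
  by rewrite -[n]addn0; apply: vanish_cmul => //; exact: vanish0.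
apply: vanish_add; [apply: vanish_add; [apply: vanish_add|]|].
- by apply: vanish_cmul_unipotentl => //; exact: unipotent_cmul.
- exact: vanish_cmul_unipotentr.
- exact: vanish_cmul_unipotentr.
- by apply: vanish_le (vanish_cmul _ _ vEpsi vE) => //; lia.
Qed.

Lemma sandwich_inj psi R R' : (2%:R : k) != 0 -> adm psi -> unipotent psi ->
  adm R -> unipotent R -> adm R' -> unipotent R' ->
  (forall t, sandwich psi R t = sandwich psi R' t) -> forall t, R t = R' t.
Proof.
by move=> two0 apsi upsi; exact/(first_order_inj (sandwich_first_order apsi upsi) two0).
Qed.

Lemma cmul_first_order f : adm f -> unipotent f -> first_order (mul f) 1.
Proof.
move=> af uf n R E aR uR aE vE _; apply: (vanish_eq (f := fun t => mul f E t - E t)).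
  by apply: functional_extensionality => t; rewrite cmulDr /=; ring.
exact: vanish_cmul_unipotentl.
Qed.

End ConvAlgTheory.

Section HopfDual.
Variables (k : fieldType) (H : algType k) (S : gc_hopf H).
Implicit Types (f g h : H -> k).
Local Notation proj := (proj S).
Local Notation cou := (cou S).
Local Notation cv := (conv S).

Lemma proj_id n x : proj n (proj n x) = proj n x.
Proof. by rewrite proj_proj eqxx. Qed.

Lemma proj_orth n m x : n != m -> proj n (proj m x) = 0.
Proof. by move=> /negbTE nm; rewrite proj_proj nm. Qed.

Lemma lin_decomp f x N : lin_fun f -> (gbnd S x <= N)%N ->
  f x = \sum_(n < N) f (proj n x).
Proof.
move=> lf le; rewrite {1}(gbnd_sum S x) lin_sum //.
rewrite (big_ord_widen _ (fun n => f (proj n x)) le) big_mkcond /=.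
apply: eq_bigr => i _; case: ifP => // /negbT; rewrite -leqNgt => /gbnd_zero ->.
by rewrite lin0.
Qed.

Lemma lin_ext_proj f g : lin_fun f -> lin_fun g ->
  (forall n x, f (proj n x) = g (proj n x)) -> forall x, f x = g x.
Proof.
move=> lf lg e x.
rewrite (lin_decomp lf (leqnn (gbnd S x))) (lin_decomp lg (leqnn (gbnd S x))).
by apply: eq_bigr => i _; rewrite e.
Qed.

Lemma conv_lin f g : lin_fun f -> lin_fun g -> lin_fun (cv f g).
Proof. exact: cop_lin. Qed.

Lemma conv_addl f g h : cv (fun x => f x + g x) h = (fun x => cv f h x + cv g h x).
Proof.
apply: functional_extensionality => x; rewrite /conv /tens -big_split /=.
by apply: eq_bigr => p _; rewrite mulrDl.
Qed.

Lemma conv_addr f g h : cv h (fun x => f x + g x) = (fun x => cv h f x + cv h g x).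
Proof.
apply: functional_extensionality => x; rewrite /conv /tens -big_split /=.
by apply: eq_bigr => p _; rewrite mulrDr.
Qed.

Lemma conv_couL f : lin_fun f -> cv cou f = f.
Proof.
move=> lf; apply: functional_extensionality => x.
by rewrite -{2}(cou_l S x) lin_sum //; apply: eq_bigr => p _; rewrite linZ.
Qed.

Lemma conv_couR f : lin_fun f -> cv f cou = f.
Proof.
move=> lf; apply: functional_extensionality => x.
by rewrite -{2}(cou_r S x) lin_sum //; apply: eq_bigr => p _; rewrite linZ // mulrC.
Qed.

Lemma conv_assoc f g h : lin_fun f -> lin_fun g -> lin_fun h ->
  cv (cv f g) h = cv f (cv g h).
Proof. by move=> lf lg lh; apply: functional_extensionality => x; apply: coassoc. Qed.

Lemma conv_cancel f g h : lin_fun f -> lin_fun g -> lin_fun h ->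
  cv f g = cou -> cv f (cv g h) = h.
Proof. by move=> lf lg lh fg; rewrite -conv_assoc // fg conv_couL. Qed.

Definition deg_lt n (x : H) := exists i y, (i < n)%N /\ x = proj i y.

Lemma vanishP n f : vanish deg_lt n f <-> forall i x, (i < n)%N -> f (proj i x) = 0.
Proof.
split=> [vf i x lt | vf _ [i [y [lt ->]]]]; last exact: vf.
by apply: vf; exists i, x.
Qed.

Lemma vanish_conv n m f g : lin_fun f -> lin_fun g ->
  vanish deg_lt n f -> vanish deg_lt m g -> vanish deg_lt (n + m) (cv f g).
Proof.
move=> lf lg /vanishP vf /vanishP vg; apply/vanishP => i x lt.
rewrite /conv (cop_graded _ _ _ lf lg); apply: big1 => [[a ha]] _ /=.
case: (ltnP a n) => han; first by apply: big1 => p _; rewrite /= vf // mul0r.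
by apply: big1 => p _; rewrite /= vg ?mulr0 //; lia.
Qed.

Lemma lin_vanish_eq0 f : lin_fun f -> (forall n, vanish deg_lt n f) -> forall x, f x = 0.
Proof.
move=> lf vf x; rewrite (lin_decomp lf (leqnn (gbnd S x))); apply: big1 => i _.
by apply: (vanishP _ _).1 (vf i.+1) _ _ _.
Qed.

Lemma deg_lt0 x : ~ deg_lt 0 x.
Proof. by case=> i [y []]. Qed.

Lemma deg_lt_le n m x : (n <= m)%N -> deg_lt n x -> deg_lt m x.
Proof. by move=> le [i [y [lt ->]]]; exists i, y; split=> //; apply: leq_trans le. Qed.

Definition hopf_dual : convAlg k H := {|
  cmul := cv; cunit := cou; admissible := @lin_fun k H; low := deg_lt;
  cmulDl := conv_addl; cmulDr := conv_addr; cmul1l := conv_couL; cmul1r := conv_couR;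
  admissible_cmul := conv_lin; admissible_add := @lin_add k H;
  admissible_sub := @lin_sub k H; admissible_unit := cou_lin S;
  low0 := deg_lt0; low_le := deg_lt_le; vanish_cmul := vanish_conv;
  vanish_separated := lin_vanish_eq0 |}.

Lemma unipotentP f : restr0_is_cou S f <-> unipotent hopf_dual f.
Proof.
rewrite /unipotent vanishP; split=> [f0 [|//] x _ | f0 x]; first by rewrite /= f0 subrr.
by apply/eqP; rewrite -subr_eq0; apply/eqP; apply: f0.
Qed.

Lemma vanishS n f : vanish (low hopf_dual) n.+1 f <->
  vanish (low hopf_dual) n f /\ forall x, f (proj n x) = 0.
Proof.
rewrite /= !vanishP; split=> [vf | [vf vn] i x].
  by split=> [i x lt|x]; apply: vf => //; lia.
by rewrite ltnS leq_eqVlt => /orP[/eqP->|]; [apply: vn | apply: vf].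
Qed.

Lemma unipotent_one f : unipotent hopf_dual f -> f 1 = 1.
Proof. by move=> /vanishP/(_ 0%N 1 isT); rewrite proj0_one /= cou_one => /subr0_eq. Qed.

End HopfDual.

Section Limit.
Variables (k : fieldType) (H : algType k) (S : gc_hopf H).
Local Notation proj := (proj S).
Local Notation vanish := (vanish (low (hopf_dual S))).
Variable u : nat -> H -> k.
Hypotheses (u_lin : forall n, lin_fun (u n))
  (u_step : forall n, vanish n.+1 (fun x => u n.+1 x - u n x)).

Definition limit x := u (gbnd S x) x.

Lemma seq_stable i n m x : (i <= n <= m)%N -> u m (proj i x) = u n (proj i x).
Proof.
move=> /andP[le_in /subnKC <-]; elim: (m - n)%N => [|d IH]; first by rewrite addn0.
rewrite addnS -IH; apply/eqP; rewrite -subr_eq0; apply/eqP.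
by have /vanishP := @u_step (n + d); apply; lia.
Qed.

Lemma limit_stable x N : (gbnd S x <= N)%N -> u N x = limit x.
Proof.
move=> le; rewrite /limit (lin_decomp (u_lin N) (leqnn (gbnd S x))).
rewrite [RHS](lin_decomp (u_lin _) (leqnn (gbnd S x))).
by apply: eq_bigr => i _; apply: seq_stable; rewrite le andbT ltnW.
Qed.

Lemma limit_lin : lin_fun limit.
Proof.
move=> a x y.
set N := maxn (gbnd S (a *: x + y)) (maxn (gbnd S x) (gbnd S y)).
rewrite -(@limit_stable (a *: x + y) N) ?leq_maxl //.
rewrite -(@limit_stable x N); last by rewrite /N; lia.
by rewrite -(@limit_stable y N) ?u_lin //; rewrite /N; lia.
Qed.

Lemma limit_proj i n x : (i <= n)%N -> limit (proj i x) = u n (proj i x).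
Proof.
move=> le; rewrite -(@limit_stable _ (maxn (gbnd S (proj i x)) n)) ?leq_maxl //.
by apply: seq_stable; rewrite le leq_maxr.
Qed.

End Limit.

Section FirstOrderSolution.
Variables (k : fieldType) (H : algType k) (S : gc_hopf H).
Local Notation proj := (proj S).
Local Notation vanish := (vanish (low (hopf_dual S))).
Local Notation A := (hopf_dual S).
Variables (F : (H -> k) -> H -> k) (lam : k) (target : H -> k).
Hypotheses (lam_neq0 : lam != 0) (lin_target : lin_fun target)
  (F_lin : forall R, lin_fun R -> unipotent A R -> lin_fun (F R))
  (F_first_order : first_order A F lam)
  (F_cou : vanish 1 (fun x => target x - F (cou S) x)).

(* Newton iteration: [F] is [lam] times the identity to first order, so adding [lam^-1]
   times the defect of degree m.+1 removes it. *)
Fixpoint approx n : H -> k :=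
  if n is m.+1 then
    fun x => approx m x + lam^-1 * (target (proj n x) - F (approx m) (proj n x))
  else cou S.

Definition correction m x := lam^-1 * (target (proj m.+1 x) - F (approx m) (proj m.+1 x)).

Lemma approxS m : approx m.+1 = (fun x => approx m x + correction m x).
Proof. by []. Qed.

Section Step.
Variable m : nat.
Hypotheses (lin_approx : lin_fun (approx m)) (uni_approx : unipotent A (approx m)).

Lemma correction_lin : lin_fun (correction m).
Proof.
apply: lin_mull; apply: lin_sub; apply: (lin_comp _ (proj_lin S m.+1)) => //.
exact: F_lin.
Qed.

Lemma correction_vanish : vanish m.+1 (correction m).
Proof.
apply/vanishP => i x lt; rewrite /correction proj_orth; last by rewrite neq_ltn lt orbT.
by rewrite lin0 // lin0 ?subrr ?mulr0 //; apply: F_lin.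
Qed.

End Step.

Lemma approx_adm n : lin_fun (approx n) /\ unipotent A (approx n).
Proof.
elim: n => [|m [lT uT]]; first by split; [exact: cou_lin | exact: unipotent_unit].
rewrite approxS; split; first by apply: lin_add => //; exact: correction_lin.
apply: (vanish_eq (f := fun x => (approx m x - cou S x) + correction m x)).
  by apply: functional_extensionality => x; rewrite addrAC.
by apply: vanish_add => //; apply: vanish_le (correction_vanish lT uT).
Qed.

Lemma approx_defect_vanish n : vanish n.+1 (fun x => target x - F (approx n) x).
Proof.
elim: n => [|m IH]; first exact: F_cou.
have [lT uT] := approx_adm m.
have K := F_first_order lT uT (correction_lin lT uT) (correction_vanish lT uT) (ltn0Sn m).
have vR : vanish m.+2 (fun x => target x - F (approx m) x - lam * correction m x).
  apply/vanishS; split.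
    apply: vanish_sub => // x lt; rewrite (correction_vanish lT uT lt) mulr0 //.
  by move=> x; rewrite /correction proj_id mulrA mulfV // mul1r subrr.
rewrite approxS; apply: vanish_eq _ (vanish_sub vR K).
by apply: functional_extensionality => x /=; ring.
Qed.

Lemma approx_step n : vanish n.+1 (fun x => approx n.+1 x - approx n x).
Proof.
have [lT uT] := approx_adm n; apply: vanish_eq (correction_vanish lT uT).
by rewrite approxS; apply: functional_extensionality => x; rewrite addrC addKr.
Qed.

Lemma first_order_solution :
  exists R, [/\ lin_fun R, unipotent A R & forall x, F R x = target x].
Proof.
have lT n := (approx_adm n).1.
have lR : lin_fun (limit S approx) by apply: limit_lin => //; exact: approx_step.
have RT n i x : (i <= n)%N -> limit S approx (proj i x) = approx n (proj i x).
  by move=> le; apply: limit_proj => //; exact: approx_step.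
have uR : unipotent A (limit S approx).
  by apply/vanishP => -[|//] x _; rewrite (RT 0%N) //= subrr.
exists (limit S approx); split => //.
apply: (lin_ext_proj (S := S)) => [||n x]; [exact: F_lin | by [] |].
have vE : vanish n.+1 (fun x => limit S approx x - approx n x).
  by apply/vanishP => i y lt; rewrite (RT n) ?subrr.
have [_ uT] := approx_adm n.
have /vanishP/(_ n x (ltnSn _)) := first_order_congr F_first_order (lT n) uT lR vE.
have /vanishP/(_ n x (ltnSn _)) := @approx_defect_vanish n.
move=> eF eT; apply: (addIr (- F (approx n) (proj n x))).
by rewrite eF eT.
Qed.

End FirstOrderSolution.

Section Solutions.
Variables (k : fieldType) (H : algType k) (S : gc_hopf H).
Implicit Types (f g phi psi : H -> k).
Local Notation A := (hopf_dual S).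
Local Notation cv := (conv S).
Local Notation cou := (cou S).

Lemma conv_right_inverse f : lin_fun f -> unipotent A f ->
  exists g, [/\ lin_fun g, unipotent A g & cv f g = cou].
Proof.
move=> lf uf.
have F_cou : vanish (low A) 1 (fun x => cou x - cv f cou x).
  rewrite conv_couR //; apply/vanishP => -[|//] x _.
  by have /vanishP/(_ 0%N x isT) /= h := uf; rewrite -opprB h oppr0.
have [g [lg ug fg]] := first_order_solution (oner_neq0 k) (cou_lin S)
  (fun R lR _ => conv_lin S lf lR) (cmul_first_order (A := A) lf uf) F_cou.
by exists g; split=> //; apply: functional_extensionality.
Qed.

Lemma conv_inverse_unique f g h : lin_fun f -> lin_fun g -> lin_fun h ->
  cv h f = cou -> cv f g = cou -> h = g.
Proof.
by move=> lf lg lh hf fg; rewrite -(conv_couR S lh) -fg -conv_assoc // hf conv_couL.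
Qed.

Lemma conv_inverse f : lin_fun f -> unipotent A f ->
  exists g, [/\ lin_fun g, unipotent A g, cv f g = cou & cv g f = cou].
Proof.
move=> lf uf; have [g [lg ug fg]] := conv_right_inverse lf uf.
have [g' [lg' _ gg']] := conv_right_inverse lg ug.
by exists g; split => //; rewrite (conv_inverse_unique lg lg' lf fg gg').
Qed.

Lemma sandwich_solution phi psi : (2%:R : k) != 0 ->
  lin_fun phi -> unipotent A phi -> lin_fun psi -> unipotent A psi ->
  exists rho, [/\ lin_fun rho, unipotent A rho & forall x, sandwich A psi rho x = phi x].
Proof.
move=> two0 lphi uphi lpsi upsi.
apply: first_order_solution two0 lphi _ (sandwich_first_order (A := A) lpsi upsi) _.
  by move=> R lR _; exact: (conv_lin S (conv_lin S lR lpsi) lR).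
rewrite /sandwich /= conv_couL // conv_couR //.
apply: vanish_eq _ (vanish_sub uphi upsi); apply: functional_extensionality => x /=.
by rewrite opprB addrA subrK.
Qed.

End Solutions.

Section Bar.
Variables (k : fieldType) (H : algType k) (S : gc_hopf H).
Implicit Types (f g : H -> k).
Local Notation proj := (proj S).
Local Notation bar := (bar S).
Local Notation cv := (conv S).
Local Notation A := (hopf_dual S).

Lemma bar_widen f x N : lin_fun f -> (gbnd S x <= N)%N ->
  bar f x = \sum_(n < N) (-1) ^+ n * f (proj n x).
Proof.
move=> lf le; rewrite /bar (big_ord_widen _ (fun n => (-1) ^+ n * f (proj n x)) le).
rewrite big_mkcond /=; apply: eq_bigr => i _.
by case: ifP => // /negbT; rewrite -leqNgt => /gbnd_zero ->; rewrite lin0 // mulr0.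
Qed.

Lemma bar_lin f : lin_fun f -> lin_fun (bar f).
Proof.
move=> lf a x y.
set N := maxn (gbnd S (a *: x + y)) (maxn (gbnd S x) (gbnd S y)).
rewrite (@bar_widen f (a *: x + y) N) ?leq_maxl //.
rewrite (@bar_widen f x N) // ?(@bar_widen f y N) //; try by rewrite /N; lia.
rewrite mulr_sumr -big_split /=; apply: eq_bigr => i _.
by rewrite (proj_lin S) lf; ring.
Qed.

Lemma bar_proj f n x : lin_fun f -> bar f (proj n x) = (-1) ^+ n * f (proj n x).
Proof.
move=> lf; have ltn : (n < maxn (gbnd S (proj n x)) n.+1)%N by rewrite leq_max ltnSn orbT.
rewrite (@bar_widen f _ (maxn (gbnd S (proj n x)) n.+1)) ?leq_maxl //.
rewrite (bigD1 (Ordinal ltn)) //= proj_id big1 ?addr0 // => j /eqP nj.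
by rewrite proj_orth ?lin0 ?mulr0 //; apply/eqP => e; apply: nj; apply: val_inj.
Qed.

Lemma bar_bar f : lin_fun f -> bar (bar f) = f.
Proof.
move=> lf; apply: functional_extensionality.
apply: (lin_ext_proj (S := S)) => //; first by do 2 apply: bar_lin.
move=> n x; rewrite bar_proj; last exact: bar_lin.
by rewrite bar_proj // mulrA -exprMn mulrNN mulr1 expr1n mul1r.
Qed.

Lemma bar_cou : bar (cou S) = cou S.
Proof.
apply: functional_extensionality; apply: (lin_ext_proj (S := S)) => [||n x].
- exact/bar_lin/cou_lin.
- exact: cou_lin.
rewrite bar_proj; last exact: cou_lin.
by case: n => [|n]; rewrite ?expr0 ?mul1r // cou_graded // mulr0.
Qed.

Lemma bar_unipotent f : lin_fun f -> unipotent A f -> unipotent A (bar f).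
Proof.
by move=> lf /vanishP uf; apply/vanishP => -[|//] x _; rewrite bar_proj // expr0 mul1r uf.
Qed.

Lemma bar_conv f g : lin_fun f -> lin_fun g -> bar (cv f g) = cv (bar f) (bar g).
Proof.
move=> lf lg; apply: functional_extensionality.
apply: (lin_ext_proj (S := S)) => [||n x].
- exact/bar_lin/conv_lin.
- by apply: conv_lin; apply: bar_lin.
rewrite bar_proj; last exact: conv_lin.
rewrite /conv (cop_graded _ _ _ lf lg) (cop_graded _ _ _ (bar_lin lf) (bar_lin lg)).
rewrite mulr_sumr; apply: eq_bigr => [[i lt_in]] _ /=; rewrite /tens mulr_sumr.
apply: eq_bigr => p _ /=; rewrite !bar_proj //.
have -> : (-1) ^+ n = (-1) ^+ i * (-1) ^+ (n - i) :> k by rewrite -exprD subnKC // -ltnS.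
by ring.
Qed.

Lemma bar_sandwich f g : lin_fun f -> lin_fun g ->
  bar (sandwich A f g) = sandwich A (bar f) (bar g).
Proof. by move=> lf lg; rewrite /sandwich /= !bar_conv //; apply: conv_lin. Qed.

End Bar.

Section Conjugation.
Variables (k : fieldType) (H : algType k) (S : gc_hopf H).
Local Notation A := (hopf_dual S).
Local Notation cv := (conv S).
Local Notation cou := (cou S).
Local Hint Resolve conv_lin : core.
Variables (phi psi rho rho' : H -> k).
Hypotheses (lphi : lin_fun phi) (lpsi : lin_fun psi).
Hypotheses (lrho : lin_fun rho) (lrho' : lin_fun rho').
Hypotheses (rho'rho : cv rho' rho = cou) (rhorho' : cv rho rho' = cou).
Hypothesis phiE : sandwich A psi rho = phi.

Lemma sandwich_conv_inverse : sandwich A phi rho' = psi.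
Proof.
rewrite -phiE /sandwich /= !conv_assoc; auto.
by rewrite conv_cancel // rhorho' conv_couR.
Qed.

Lemma sandwich_inverses phi' psi' : lin_fun phi' -> lin_fun psi' ->
  cv phi phi' = cou -> cv psi' psi = cou -> sandwich A phi' rho = psi'.
Proof.
move=> lphi' lpsi' phiphi' psi'psi.
have lX : lin_fun (sandwich A phi' rho) by rewrite /sandwich /=; auto.
apply/esym/(conv_inverse_unique lpsi lX lpsi' psi'psi).
rewrite -sandwich_conv_inverse /sandwich /= !conv_assoc; auto.
by rewrite (conv_cancel lrho' lrho _ rho'rho) ?(conv_cancel lphi lphi' _ phiphi'); auto.
Qed.

End Conjugation.

Section TensorSquare.
Variables (k : fieldType) (H : algType k) (S : gc_hopf H).
Implicit Types (F G K : H * H -> k) (f g : H -> k).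
Local Notation proj := (proj S).
Local Notation cou := (cou S).
Local Notation cop := (cop S).
Local Notation cv := (conv S).

(* Bilinear forms on H x H stand for linear forms on H (x) H, with the tensor product
   coalgebra structure and the total degree. *)
Definition conv2 F G (t : H * H) : k :=
  \sum_(p <- cop t.1) \sum_(q <- cop t.2) F (p.1, q.1) * G (p.2, q.2).

Definition cou2 (t : H * H) : k := cou t.1 * cou t.2.

Definition bilin F :=
  (forall y, lin_fun (fun x => F (x, y))) /\ (forall x, lin_fun (fun y => F (x, y))).

Definition bideg_lt n (t : H * H) :=
  exists i j x y, (i + j < n)%N /\ t = (proj i x, proj j y).

Lemma vanish2P n F :
  vanish bideg_lt n F <-> forall i j x y, (i + j < n)%N -> F (proj i x, proj j y) = 0.
Proof.
split=> [vF i j x y lt | vF _ [i [j [x [y [lt ->]]]]]]; last exact: vF.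
by apply: vF; exists i, j, x, y.
Qed.

Lemma conv2_addl F G K : conv2 (fun t => F t + G t) K = (fun t => conv2 F K t + conv2 G K t).
Proof.
apply: functional_extensionality => t; rewrite /conv2 -big_split /=.
by apply: eq_bigr => p _; rewrite -big_split; apply: eq_bigr => q _; rewrite mulrDl.
Qed.

Lemma conv2_addr F G K : conv2 K (fun t => F t + G t) = (fun t => conv2 K F t + conv2 K G t).
Proof.
apply: functional_extensionality => t; rewrite /conv2 -big_split /=.
by apply: eq_bigr => p _; rewrite -big_split; apply: eq_bigr => q _; rewrite mulrDr.
Qed.

Lemma conv2_swap F G x y : conv2 F G (x, y) =
  \sum_(q <- cop y) tens (fun a => F (a, q.1)) (fun b => G (b, q.2)) (cop x).
Proof. by rewrite /conv2 /tens exchange_big. Qed.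

Lemma bilin_conv2 F G : bilin F -> bilin G -> bilin (conv2 F G).
Proof.
move=> [F1 F2] [G1 G2]; split=> [y | x].
  have -> : (fun x => conv2 F G (x, y)) =
      (fun x => \sum_(q <- cop y) tens (fun a => F (a, q.1)) (fun b => G (b, q.2)) (cop x)).
    by apply: functional_extensionality => x; rewrite conv2_swap.
  by apply: lin_sum_fun => q; apply: cop_lin.
have -> : (fun y => conv2 F G (x, y)) =
    (fun y => \sum_(p <- cop x) tens (fun b => F (p.1, b)) (fun b => G (p.2, b)) (cop y)).
  by [].
by apply: lin_sum_fun => p; apply: cop_lin.
Qed.

Lemma bilin_add F G : bilin F -> bilin G -> bilin (fun t => F t + G t).
Proof. by move=> [F1 F2] [G1 G2]; split=> ?; apply: lin_add. Qed.

Lemma bilin_sub F G : bilin F -> bilin G -> bilin (fun t => F t - G t).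
Proof. by move=> [F1 F2] [G1 G2]; split=> ?; apply: lin_sub. Qed.

Definition tensor_form f g (t : H * H) : k := f t.1 * g t.2.

Definition mul_form f (t : H * H) : k := f (t.1 * t.2).

Lemma bilin_tensor_form f g : lin_fun f -> lin_fun g -> bilin (tensor_form f g).
Proof.
by move=> lf lg; split=> ?; rewrite /tensor_form /=; [apply: lin_mulr | apply: lin_mull].
Qed.

Lemma bilin_mul_form f : lin_fun f -> bilin (mul_form f).
Proof.
move=> lf; split=> [y | x] a u v; rewrite /mul_form /=.
  by rewrite mulrDl -scalerAl lf.
by rewrite mulrDr -scalerAr lf.
Qed.

Lemma bilin_cou2 : bilin cou2.
Proof. exact: (bilin_tensor_form (cou_lin S) (cou_lin S)). Qed.

Lemma conv2_cou2L F : bilin F -> conv2 cou2 F = F.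
Proof.
move=> [F1 F2]; apply: functional_extensionality => -[x y].
transitivity (cv cou (fun a => F (a, y)) x); last by rewrite (conv_couL S (F1 y)).
rewrite /conv2 /conv /tens /=; apply: eq_bigr => p _.
transitivity (cou p.1 * cv cou (fun b => F (p.2, b)) y).
  by rewrite /conv /tens mulr_sumr; apply: eq_bigr => q _; rewrite /cou2 /=; ring.
by rewrite (conv_couL S (F2 p.2)).
Qed.

Lemma conv2_cou2R F : bilin F -> conv2 F cou2 = F.
Proof.
move=> [F1 F2]; apply: functional_extensionality => -[x y].
transitivity (cv (fun a => F (a, y)) cou x); last by rewrite (conv_couR S (F1 y)).
rewrite /conv2 /conv /tens /=; apply: eq_bigr => p _.
transitivity (cv (fun b => F (p.1, b)) cou y * cou p.2).
  by rewrite /conv /tens mulr_suml; apply: eq_bigr => q _; rewrite /cou2 /=; ring.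
by rewrite (conv_couR S (F2 p.1)).
Qed.

Lemma vanish_conv2 n m F G : bilin F -> bilin G ->
  vanish bideg_lt n F -> vanish bideg_lt m G -> vanish bideg_lt (n + m) (conv2 F G).
Proof.
move=> [F1 F2] [G1 G2] /vanish2P vF /vanish2P vG; apply/vanish2P => i j x y lt.
rewrite conv2_swap (eq_bigr _ (fun q _ => cop_graded S i x (F1 q.1) (G1 q.2))).
rewrite exchange_big /=; apply: big1 => -[a lt_ai] _ /=.
rewrite /tens exchange_big /=; apply: big1 => p _.
have -> : \sum_(q <- cop (proj j y)) F (proj a p.1, q.1) * G (proj (i - a) p.2, q.2) =
    tens (fun b => F (proj a p.1, b)) (fun b => G (proj (i - a) p.2, b)) (cop (proj j y)).
  by [].
rewrite (cop_graded S j y (F2 _) (G2 _)); apply: big1 => -[b lt_bj] _ /=.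
apply: big1 => q _ /=.
case: (ltnP (a + b) n) => le_n; first by rewrite vF // mul0r.
by rewrite vG ?mulr0 //; lia.
Qed.

Lemma bilin_vanish_eq0 F : bilin F -> (forall n, vanish bideg_lt n F) -> forall t, F t = 0.
Proof.
move=> [F1 F2] vF [x y].
rewrite (lin_decomp (F1 y) (leqnn (gbnd S x))).
apply: big1 => i _ /=; rewrite (lin_decomp (F2 _) (leqnn (gbnd S y))).
by apply: big1 => j _; have /vanish2P := vF (i + j).+1; apply.
Qed.

Lemma bideg_lt0 t : ~ bideg_lt 0 t.
Proof. by case=> i [j [x [y []]]]. Qed.

Lemma bideg_lt_le n m t : (n <= m)%N -> bideg_lt n t -> bideg_lt m t.
Proof.
by move=> le [i [j [x [y [lt ->]]]]]; exists i, j, x, y; split=> //; apply: leq_trans le.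
Qed.

Definition hopf_dual2 : convAlg k (H * H) := {|
  cmul := conv2; cunit := cou2; admissible := bilin; low := bideg_lt;
  cmulDl := conv2_addl; cmulDr := conv2_addr;
  cmul1l := conv2_cou2L; cmul1r := conv2_cou2R;
  admissible_cmul := bilin_conv2; admissible_add := bilin_add;
  admissible_sub := bilin_sub; admissible_unit := bilin_cou2;
  low0 := bideg_lt0; low_le := bideg_lt_le; vanish_cmul := vanish_conv2;
  vanish_separated := bilin_vanish_eq0 |}.

Lemma conv2_tensor_form f f' g g' :
  conv2 (tensor_form f f') (tensor_form g g') = tensor_form (cv f g) (cv f' g').
Proof.
apply: functional_extensionality => -[x y].
rewrite /conv2 /tensor_form /conv /tens big_distrl; apply: eq_bigr => p _ /=.
by rewrite big_distrr; apply: eq_bigr => q _ /=; ring.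
Qed.

Lemma conv2_mul_form f g : lin_fun f -> lin_fun g ->
  conv2 (mul_form f) (mul_form g) = mul_form (cv f g).
Proof.
by move=> lf lg; apply: functional_extensionality => -[x y]; rewrite /mul_form /conv cop_mul.
Qed.

Lemma unipotent_tensor_form f g :
  unipotent (hopf_dual S) f -> unipotent (hopf_dual S) g ->
  unipotent hopf_dual2 (tensor_form f g).
Proof.
move=> /vanishP uf /vanishP ug; apply/vanish2P => -[|//] [|//] x y _ /=.
by rewrite /tensor_form /cou2 /= (subr0_eq (uf 0%N x isT)) (subr0_eq (ug 0%N y isT)) subrr.
Qed.

Lemma unipotent_mul_form f : lin_fun f -> unipotent (hopf_dual S) f ->
  unipotent hopf_dual2 (mul_form f).
Proof.
move=> lf uf; have f1 := unipotent_one uf.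
apply/vanish2P => -[|//] [|//] x y _ /=.
have [c ->] := proj0_scal S x; have [d ->] := proj0_scal S y.
have lc := cou_lin S.
rewrite /mul_form /cou2 /= -scalerAl -scalerAr mul1r scalerA !linZ //.
by rewrite f1 cou_one; ring.
Qed.

End TensorSquare.

Section SolutionProperties.
Variables (k : fieldType) (H : algType k) (S : gc_hopf H).
Local Notation A := (hopf_dual S).
Local Notation A2 := (hopf_dual2 S).
Local Notation cv := (conv S).
Local Notation bar := (bar S).
Variable two_neq0 : (2%:R : k) != 0.
Variables (phi psi rho : H -> k).
Hypotheses (lphi : lin_fun phi) (lpsi : lin_fun psi) (lrho : lin_fun rho).
Hypotheses (uphi : unipotent A phi) (upsi : unipotent A psi) (urho : unipotent A rho).
Hypothesis phiE : sandwich A psi rho = phi.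

Lemma sandwich_character : character phi -> character psi -> character rho.
Proof.
move=> [_ _ phiM] [_ _ psiM]; split=> // [|x y]; first exact: unipotent_one urho.
have psiE : mul_form psi = tensor_form psi psi.
  by apply: functional_extensionality => -[u v]; apply: psiM.
have lrp := conv_lin S lrho lpsi.
suff /(_ (x, y)) : forall t, mul_form rho t = tensor_form rho rho t by [].
apply: (sandwich_inj (A := A2) two_neq0 (bilin_mul_form lpsi) (unipotent_mul_form lpsi upsi)
  (bilin_mul_form lrho) (unipotent_mul_form lrho urho)
  (bilin_tensor_form lrho lrho) (unipotent_tensor_form urho urho)) => t.
rewrite /sandwich /= !conv2_mul_form // psiE !conv2_tensor_form.
by case: t => u v; rewrite -[cv (cv rho psi) rho]/(sandwich A psi rho) phiE; apply: phiM.
Qed.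

Lemma sandwich_even : conv_inv S psi (bar phi) -> even_fun S rho.
Proof.
move=> psi_inv.
have bphi_psi : cv (bar phi) psi = cou S.
  by apply: functional_extensionality => x; case: (psi_inv x).
have phi_bpsi : cv phi (bar psi) = cou S.
  by rewrite -bar_cou -bphi_psi bar_conv ?bar_bar //; apply: bar_lin.
have [rho' [lrho' _ rhorho' rho'rho]] := conv_inverse lrho urho.
have bphiE := sandwich_inverses lphi lpsi lrho lrho' rho'rho rhorho' phiE
  (bar_lin S lpsi) (bar_lin S lphi) phi_bpsi bphi_psi.
move=> x; apply: (sandwich_inj (A := A) two_neq0 (bar_lin S lpsi) (bar_unipotent lpsi upsi)
  (bar_lin S lrho) (bar_unipotent lrho urho) lrho urho) => y.
by rewrite bphiE -bar_sandwich // phiE.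
Qed.

Lemma sandwich_odd : (forall x, bar phi x = psi x) -> odd_fun S rho.
Proof.
move=> bphiE; have {}bphiE : bar phi = psi by apply: functional_extensionality.
have [rho' [lrho' urho' rhorho' rho'rho]] := conv_inverse lrho urho.
suff bE : bar rho = rho' by move=> x; rewrite bE rhorho' rho'rho.
apply: functional_extensionality.
apply: (sandwich_inj (A := A) two_neq0 lphi uphi (bar_lin S lrho) (bar_unipotent lrho urho)
  lrho' urho') => x.
rewrite (sandwich_conv_inverse lpsi lrho lrho' rho'rho rhorho' phiE).
by rewrite -{1}(bar_bar S lphi) bphiE -bar_sandwich // phiE bphiE.
Qed.

End SolutionProperties.

Theorem proposition1p4 (k : fieldType) (H : algType k) (S : gc_hopf H)
    (char2 : (2%:R : k) != 0)
    (phi psi : H -> k)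
    (lphi : lin_fun phi) (lpsi : lin_fun psi)
    (phi0 : restr0_is_cou S phi) (psi0 : restr0_is_cou S psi) :
  exists rho : H -> k,
    (* (a) existence *)
    lin_fun rho /\ restr0_is_cou S rho /\
    (forall x, phi x = conv S (conv S rho psi) rho x) /\
        (* (a) uniqueness *)
        (forall rho' : H -> k, lin_fun rho' -> restr0_is_cou S rho' ->
           (forall x, phi x = conv S (conv S rho' psi) rho' x) ->
           forall x, rho' x = rho x) /\
        (* (b) *)
        (character phi -> character psi -> character rho) /\
        (* (c) even case *)
        (conv_inv S psi (bar S phi) -> even_fun S rho) /\
        (* (c) odd case *)
        ((forall x, bar S phi x = psi x) -> odd_fun S rho).
Proof.
have /unipotentP uphi := phi0; have /unipotentP upsi := psi0.
have [rho [lrho urho rhoE]] := sandwich_solution char2 lphi uphi lpsi upsi.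
have phiE : sandwich (hopf_dual S) psi rho = phi by apply: functional_extensionality.
exists rho; split=> //; split; first exact/unipotentP.
split; first by move=> x; rewrite -rhoE.
split.
  move=> rho' lrho' /unipotentP urho' rho'E x.
  apply: (sandwich_inj (A := hopf_dual S) char2 lpsi upsi lrho' urho' lrho urho) => y.
  by rewrite [RHS]rhoE rho'E.
split; first exact: (sandwich_character char2 lpsi lrho upsi urho phiE).
split; first exact: (sandwich_even char2 lphi lpsi lrho upsi urho phiE).
exact: (sandwich_odd char2 lphi lpsi lrho uphi urho phiE).
Qed.
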